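(* Let $a<b$ and $c<d$ be real numbers, and let $f,g:[a,b]\times[c,d]\to\mathbb{R}$ be continuous functions whose first partial derivatives $D_1 f, D_2 f, D_1 g, D_2 g$ and mixed second partial derivatives $D_2D_1 f$, $D_2 D_1 g$ exist and are continuous on $[a,b]\times[c,d]$. For $h\in\{f,g\}$ and $(x,y)\in[a,b]\times[c,d]$ define \[ P(h(x,y))=\frac12\big[h(x,c)+h(x,d)+h(a,y)+h(b,y)\big]-\frac14\big[h(a,c)+h(a,d)+h(b,c)+h(b,d)\big]. \] Then \[ \left|\int_a^b\int_c^d\Big[f(x,y)g(x,y)-\frac12\big(P(f(x,y))\,g(x,y)+P(g(x,y))\,f(x,y)\big)\Big]\,dy\,dx\right| \le \frac18(b-a)(d-c)\int_a^b\int_c^d\Big[|g(x,y)|\,\|D_2D_1 f\|_\infty+|f(x,y)|\,\|D_2D_1 g\|_\infty\Big]\,dy\,dx . \]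
   Context: $D_1$ and $D_2$ denote partial differentiation with respect to the first and second variable respectively, so $D_2D_1 f=\frac{\partial}{\partial y}\frac{\partial f}{\partial x}$. For a function $h$ on $[a,b]\times[c,d]$, $\|h\|_\infty=\sup_{(x,y)\in[a,b]\times[c,d]}|h(x,y)|$. *)

From Stdlib Require Import Reals.
From Coquelicot Require Import Coquelicot.
Open Scope R_scope.

Definition rect (a b c d : R) (p : R * R) : Prop :=
  a <= fst p <= b /\ c <= snd p <= d.

Definition cont_on_rect (a b c d : R) (h : R -> R -> R) : Prop :=
  forall x y, a <= x <= b -> c <= y <= d ->
    filterlim (fun p : R * R => h (fst p) (snd p))
      (within (rect a b c d) (locally (x, y))) (locally (h x y)).

(* Derivative of u : R -> R at x relative to the interval [lo,hi]
   (one-sided at the endpoints). *)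
Definition is_derive_in (lo hi : R) (u : R -> R) (x l : R) : Prop :=
  filterlim (fun t => (u t - u x) / (t - x))
    (within (fun t => lo <= t <= hi /\ t <> x) (locally x)) (locally l).

Definition is_D1 (a b c d : R) (h h1 : R -> R -> R) : Prop :=
  forall x y, a <= x <= b -> c <= y <= d ->
    is_derive_in a b (fun t => h t y) x (h1 x y).

Definition is_D2 (a b c d : R) (h h2 : R -> R -> R) : Prop :=
  forall x y, a <= x <= b -> c <= y <= d ->
    is_derive_in c d (fun t => h x t) y (h2 x y).

Definition sup_norm (a b c d : R) (h : R -> R -> R) : R :=
  real (Lub_Rbar (fun z => exists x y, a <= x <= b /\ c <= y <= d /\
                                       z = Rabs (h x y))).

Definition Pop (a b c d : R) (h : R -> R -> R) (x y : R) : R :=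
  / 2 * (h x c + h x d + h a y + h b y)
  - / 4 * (h a c + h a d + h b c + h b d).

Definition iint (a b c d : R) (k : R -> R -> R) : R :=
  RInt (fun x => RInt (fun y => k x y) c d) a b.

(* For h = f, g, the difference h - P h is a quarter of the sum of the four
   rectangle differences h(x,y) - h(α,y) - h(x,γ) + h(α,γ) over the corners
   (α,γ) of [a,b] x [c,d].  The mean value inequality, applied in x to
   t ↦ h(t,y) - h(t,γ) and then in y to D_1 h, bounds each of them by
   ‖D_2D_1 h‖ |x-α| |y-γ|, and these four areas add up to (b-a)(d-c).
   Since f g - ½(P f g + P g f) = ½[(f - P f) g + (g - P g) f], the estimate
   holds pointwise, and it remains to integrate it. *)

From Stdlib Require Import Reals Lra Lia.
From Coquelicot Require Import Coquelicot.
Open Scope R_scope.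

(* Composing with clamps extends a function continuous on the rectangle to a
   function continuous on the whole plane, as Coquelicot's mean value theorem
   and 2-d continuity results require. *)
Definition clamp (lo hi x : R) : R := Rmax lo (Rmin hi x).

Lemma clamp_in lo hi x : lo <= hi -> lo <= clamp lo hi x <= hi.
Proof. intros. unfold clamp, Rmax, Rmin. repeat destruct Rle_dec; lra. Qed.

Lemma clamp_id lo hi x : lo <= x <= hi -> clamp lo hi x = x.
Proof. intros. unfold clamp, Rmax, Rmin. repeat destruct Rle_dec; lra. Qed.

Lemma Rabs_clamp_sub_le lo hi x y :
  lo <= hi -> Rabs (clamp lo hi x - clamp lo hi y) <= Rabs (x - y).
Proof.
  intros. unfold clamp, Rmax, Rmin, Rabs.
  repeat destruct Rle_dec; repeat destruct Rcase_abs; lra.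
Qed.

Lemma is_derive_in_subinterval A B lo hi u x l :
  A <= lo -> hi <= B -> is_derive_in A B u x l -> is_derive_in lo hi u x l.
Proof.
  intros HA HB Hd P HP.
  destruct (Hd P HP) as [del Hdel]. exists del.
  intros t Ht [[Hlo Hhi] Hne]. apply Hdel; [exact Ht | repeat split; lra || exact Hne].
Qed.

Lemma is_derive_in_minus A B u v x l m :
  is_derive_in A B u x l -> is_derive_in A B v x m ->
  is_derive_in A B (fun t => u t - v t) x (l - m).
Proof.
  intros Hu Hv.
  eapply filterlim_ext.
  2: { eapply filterlim_comp_2;
       [exact Hu | eapply filterlim_comp; [exact Hv | apply (filterlim_opp (V := R_NormedModule))]
       | apply (filterlim_plus (V := R_NormedModule) l (- m))]. }
  intros t. unfold plus, opp; simpl. unfold Rdiv. ring.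
Qed.

Lemma is_derive_in_interior lo hi u x l :
  lo < x < hi -> is_derive_in lo hi u x l -> is_derive u x l.
Proof.
  intros Hx Hd. apply is_derive_Reals. intros eps Heps.
  destruct (Hd (fun q => Rabs (q - l) < eps)) as [del Hdel].
  { exists (mkposreal eps Heps). intros q Hq. exact Hq. }
  assert (Hpos : 0 < Rmin del (Rmin (x - lo) (hi - x))).
  { apply Rmin_pos; [apply cond_pos | apply Rmin_pos; lra]. }
  exists (mkposreal _ Hpos). intros h Hh0 Hh. simpl in Hh.
  assert (Hhdel : Rabs h < del) by (eapply Rlt_le_trans; [exact Hh | apply Rmin_l]).
  assert (Hhin : Rabs h < Rmin (x - lo) (hi - x))
    by (eapply Rlt_le_trans; [exact Hh | apply Rmin_r]).
  assert (Hlo := Rmin_l (x - lo) (hi - x)). assert (Hhi := Rmin_r (x - lo) (hi - x)).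
  apply Rabs_def2 in Hhin.
  specialize (Hdel (x + h)). replace (x + h - x) with h in Hdel by ring.
  apply Hdel.
  - change (Rabs (x + h - x) < del). replace (x + h - x) with h by ring. exact Hhdel.
  - split; [lra | intro E; apply Hh0; lra].
Qed.

Lemma is_derive_in_continuous lo hi u x l :
  is_derive_in lo hi u x l ->
  filterlim u (within (fun t => lo <= t <= hi) (locally x)) (locally (u x)).
Proof.
  intros Hd P [eps HP].
  destruct (Hd (fun q => Rabs (q - l) < 1)) as [del Hdel].
  { exists (mkposreal 1 Rlt_0_1). intros q Hq. exact Hq. }
  set (K := Rabs l + 1).
  assert (HK : 0 < K) by (unfold K; pose proof (Rabs_pos l); lra).
  assert (Hpos : 0 < Rmin del (eps / K)).
  { apply Rmin_pos; [apply cond_pos | apply Rdiv_lt_0_compat; [apply cond_pos | exact HK]]. }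
  exists (mkposreal _ Hpos). intros t Ht Htin. simpl in Ht. apply HP.
  change (Rabs (u t - u x) < eps).
  destruct (Req_dec t x) as [-> | Hne].
  { rewrite Rminus_diag, Rabs_R0. apply cond_pos. }
  assert (Hq : Rabs ((u t - u x) / (t - x) - l) < 1).
  { apply Hdel; [| split; assumption].
    change (Rabs (t - x) < del). eapply Rlt_le_trans; [exact Ht | apply Rmin_l]. }
  assert (Hq' : Rabs ((u t - u x) / (t - x)) <= K).
  { pose proof (Rabs_triang_inv ((u t - u x) / (t - x)) l). unfold K. lra. }
  assert (Htx : Rabs (t - x) < eps / K).
  { change (Rabs (t - x) < Rmin del (eps / K)) in Ht.
    eapply Rlt_le_trans; [exact Ht | apply Rmin_r]. }
  replace (u t - u x) with ((u t - u x) / (t - x) * (t - x)) by (field; lra).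
  rewrite Rabs_mult.
  apply Rle_lt_trans with (K * Rabs (t - x)).
  { apply Rmult_le_compat_r; [apply Rabs_pos | exact Hq']. }
  apply Rlt_le_trans with (K * (eps / K)).
  - apply Rmult_lt_compat_l; assumption.
  - right. field. lra.
Qed.

Lemma continuity_pt_clamp_comp lo hi u x : lo <= hi ->
  (forall t, lo <= t <= hi ->
     filterlim u (within (fun s => lo <= s <= hi) (locally t)) (locally (u t))) ->
  continuity_pt (fun t => u (clamp lo hi t)) x.
Proof.
  intros Hlh Hu. apply continuity_pt_locally. intros eps.
  destruct (Hu (clamp lo hi x) (clamp_in lo hi x Hlh) (ball (u (clamp lo hi x)) eps))
    as [del Hdel].
  { exists eps. auto. }
  exists del. intros s Hs. apply Hdel; [| apply clamp_in, Hlh].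
  change (Rabs (clamp lo hi s - clamp lo hi x) < del).
  eapply Rle_lt_trans; [apply Rabs_clamp_sub_le, Hlh | exact Hs].
Qed.

Lemma mean_value_ineq lo hi u u' K : lo <= hi ->
  (forall t, lo <= t <= hi -> is_derive_in lo hi u t (u' t)) ->
  (forall t, lo <= t <= hi -> Rabs (u' t) <= K) ->
  Rabs (u hi - u lo) <= K * (hi - lo).
Proof.
  intros Hlh Hd HK.
  destruct (MVT_gen (fun t => u (clamp lo hi t)) lo hi u') as [t [Ht Heq]];
    rewrite ?Rmin_left, ?Rmax_right in * by exact Hlh.
  - intros t Ht. apply (is_derive_ext_loc u).
    + assert (Hpos : 0 < Rmin (t - lo) (hi - t)) by (apply Rmin_pos; lra).
      exists (mkposreal _ Hpos). intros s Hs.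
      change (Rabs (s - t) < Rmin (t - lo) (hi - t)) in Hs.
      assert (Hl := Rmin_l (t - lo) (hi - t)). assert (Hr := Rmin_r (t - lo) (hi - t)).
      apply Rabs_lt_between in Hs. rewrite clamp_id by lra. reflexivity.
    + apply (is_derive_in_interior lo hi); [exact Ht | apply Hd; lra].
  - intros t _. apply continuity_pt_clamp_comp; [exact Hlh |].
    intros s Hs. exact (is_derive_in_continuous _ _ _ _ _ (Hd s Hs)).
  - rewrite !clamp_id in Heq by lra. rewrite Heq, Rabs_mult, (Rabs_right (hi - lo)) by lra.
    apply Rmult_le_compat_r; [lra | apply HK, Ht].
Qed.

Lemma mean_value_ineq_abs lo hi u u' K :
  (forall t, lo <= t <= hi -> is_derive_in lo hi u t (u' t)) ->
  (forall t, lo <= t <= hi -> Rabs (u' t) <= K) ->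
  forall p q, lo <= p <= hi -> lo <= q <= hi -> Rabs (u p - u q) <= K * Rabs (p - q).
Proof.
  intros Hd HK.
  assert (Hle : forall p q, lo <= q <= p -> p <= hi -> Rabs (u p - u q) <= K * Rabs (p - q)).
  { intros p q Hqp Hp. rewrite (Rabs_right (p - q)) by lra.
    apply (mean_value_ineq q p u u'); [lra | | intros; apply HK; lra].
    intros t Ht. apply (is_derive_in_subinterval lo hi); [lra | lra | apply Hd; lra]. }
  intros p q Hp Hq. destruct (Rle_dec q p).
  - apply Hle; lra.
  - rewrite <- Rabs_Ropp, <- (Rabs_Ropp (p - q)), !Ropp_minus_distr. apply Hle; lra.
Qed.

Lemma Rabs_rect_diff_le a b c d h h1 h12 M :
  is_D1 a b c d h h1 -> is_D2 a b c d h1 h12 ->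
  (forall x y, a <= x <= b -> c <= y <= d -> Rabs (h12 x y) <= M) ->
  forall x x' y y', a <= x <= b -> a <= x' <= b -> c <= y <= d -> c <= y' <= d ->
  Rabs (h x y - h x' y - h x y' + h x' y') <= M * Rabs (y - y') * Rabs (x - x').
Proof.
  intros D1 D12 HM x x' y y' Hx Hx' Hy Hy'.
  replace (h x y - h x' y - h x y' + h x' y')
    with ((h x y - h x y') - (h x' y - h x' y')) by ring.
  apply (mean_value_ineq_abs a b (fun t => h t y - h t y') (fun t => h1 t y - h1 t y'));
    [| | exact Hx | exact Hx'].
  - intros t Ht. apply is_derive_in_minus; apply D1; assumption.
  - intros t Ht. apply (mean_value_ineq_abs c d (h1 t) (h12 t)); try assumption.
    + intros s Hs. apply D12; assumption.
    + intros s Hs. apply HM; assumption.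
Qed.

Lemma Rabs_sub_Pop_le a b c d h h1 h12 M : a <= b -> c <= d ->
  is_D1 a b c d h h1 -> is_D2 a b c d h1 h12 ->
  (forall x y, a <= x <= b -> c <= y <= d -> Rabs (h12 x y) <= M) ->
  forall x y, a <= x <= b -> c <= y <= d ->
  Rabs (h x y - Pop a b c d h x y) <= / 4 * (b - a) * (d - c) * M.
Proof.
  intros Hab Hcd D1 D12 HM x y Hx Hy.
  assert (Hcorner : forall x' y', a <= x' <= b -> c <= y' <= d ->
    Rabs (h x y - h x' y - h x y' + h x' y') <= M * Rabs (y - y') * Rabs (x - x')).
  { intros x' y' Hx' Hy'.
    exact (Rabs_rect_diff_le a b c d h h1 h12 M D1 D12 HM x x' y y' Hx Hx' Hy Hy'). }
  assert (Rac := Hcorner a c ltac:(lra) ltac:(lra)).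
  assert (Rad := Hcorner a d ltac:(lra) ltac:(lra)).
  assert (Rbc := Hcorner b c ltac:(lra) ltac:(lra)).
  assert (Rbd := Hcorner b d ltac:(lra) ltac:(lra)).
  rewrite (Rabs_right (y - c)), (Rabs_right (x - a)), (Rabs_left1 (y - d)), (Rabs_left1 (x - b))
    in * by lra.
  apply Rabs_le_between in Rac, Rad, Rbc, Rbd.
  apply Rabs_le_between. unfold Pop.
  assert (E : M * (y - c) * (x - a) + M * - (y - d) * (x - a) + M * (y - c) * - (x - b)
     + M * - (y - d) * - (x - b) = (b - a) * (d - c) * M) by ring.
  lra.
Qed.

Lemma continuity_2d_pt_clamp a b c d h : a <= b -> c <= d -> cont_on_rect a b c d h ->
  forall x y, continuity_2d_pt (fun u v => h (clamp a b u) (clamp c d v)) x y.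
Proof.
  intros Hab Hcd Ch x y eps.
  destruct (Ch _ _ (clamp_in a b x Hab) (clamp_in c d y Hcd)
              (ball (h (clamp a b x) (clamp c d y)) eps)) as [del Hdel].
  { exists eps. auto. }
  exists del. intros u v Hu Hv.
  apply (Hdel (clamp a b u, clamp c d v)); [split | split; apply clamp_in; assumption].
  - change (Rabs (clamp a b u - clamp a b x) < del).
    eapply Rle_lt_trans; [apply Rabs_clamp_sub_le, Hab | exact Hu].
  - change (Rabs (clamp c d v - clamp c d y) < del).
    eapply Rle_lt_trans; [apply Rabs_clamp_sub_le, Hcd | exact Hv].
Qed.

Lemma continuity_2d_pt_freeze2 h x y y0 :
  continuity_2d_pt h x y0 -> continuity_2d_pt (fun u _ => h u y0) x y.
Proof.
  intros HC eps. destruct (HC eps) as [del Hdel]. exists del. intros u v Hu _.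
  apply Hdel; [exact Hu | rewrite Rminus_diag, Rabs_R0; apply cond_pos].
Qed.

Lemma continuity_2d_pt_freeze1 h x y x0 :
  continuity_2d_pt h x0 y -> continuity_2d_pt (fun _ v => h x0 v) x y.
Proof.
  intros HC eps. destruct (HC eps) as [del Hdel]. exists del. intros u v _ Hv.
  apply Hdel; [rewrite Rminus_diag, Rabs_R0; apply cond_pos | exact Hv].
Qed.

Lemma continuity_2d_pt_Pop a b c d h : (forall x y, continuity_2d_pt h x y) ->
  forall x y, continuity_2d_pt (Pop a b c d h) x y.
Proof.
  intros HC x y. unfold Pop.
  repeat first [ apply continuity_2d_pt_minus | apply continuity_2d_pt_plus
               | apply continuity_2d_pt_mult | apply continuity_2d_pt_const
               | apply continuity_2d_pt_freeze1, HC | apply continuity_2d_pt_freeze2, HC ].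
Qed.

Lemma continuity_2d_pt_Pop_clamp a b c d h : a <= b -> c <= d -> cont_on_rect a b c d h ->
  forall x y, continuity_2d_pt (fun u v => Pop a b c d h (clamp a b u) (clamp c d v)) x y.
Proof.
  intros Hab Hcd Ch x y.
  apply (continuity_2d_pt_ext (Pop a b c d (fun u v => h (clamp a b u) (clamp c d v)))).
  - intros u v. unfold Pop.
    rewrite (clamp_id a b a), (clamp_id a b b), (clamp_id c d c), (clamp_id c d d) by lra.
    reflexivity.
  - apply continuity_2d_pt_Pop, continuity_2d_pt_clamp; assumption.
Qed.

Lemma Rabs_telescope_le (w : nat -> R) e N :
  (forall k, (k < N)%nat -> Rabs (w (S k) - w k) <= e) -> Rabs (w N - w O) <= INR N * e.
Proof.
  induction N as [| N IH]; intros Hstep.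
  - rewrite Rminus_diag, Rabs_R0. simpl. lra.
  - rewrite S_INR.
    replace (w (S N) - w O) with ((w (S N) - w N) + (w N - w O)) by ring.
    eapply Rle_trans; [apply Rabs_triang |].
    assert (H1 := Hstep N (Nat.lt_succ_diag_r N)).
    assert (H2 := IH (fun k Hk => Hstep k (Nat.lt_lt_succ_r _ _ Hk))).
    lra.
Qed.

Lemma bounded_on_rect a b c d h : a <= b -> c <= d -> cont_on_rect a b c d h ->
  exists M, forall x y, a <= x <= b -> c <= y <= d -> Rabs (h x y) <= M.
Proof.
  intros Hab Hcd Ch.
  set (H := fun u v => h (clamp a b u) (clamp c d v)).
  destruct (uniform_continuity_2d H a b c d
              (fun x y _ _ => continuity_2d_pt_clamp a b c d h Hab Hcd Ch x y)
              (mkposreal 1 Rlt_0_1)) as [del Hdel].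
  assert (Hdel0 := cond_pos del).
  destruct (INR_unbounded ((b - a + (d - c)) / del)) as [N HN].
  assert (HNdel : b - a + (d - c) < INR N * del).
  { apply (Rmult_gt_compat_r del) in HN; [| exact Hdel0].
    unfold Rdiv in HN. rewrite Rmult_assoc, Rinv_l, Rmult_1_r in HN by lra. lra. }
  assert (HN0 : 0 < INR N) by nra.
  (* Walk from (a,c) to (x,y) in N steps, each of which moves h by less than 1. *)
  exists (Rabs (h a c) + INR N). intros x y Hx Hy.
  set (t := fun k : nat => INR k / INR N).
  set (w := fun k => H (a + t k * (x - a)) (c + t k * (y - c))).
  assert (Ht : forall k, (k <= N)%nat -> 0 <= t k <= 1).
  { intros k Hk. apply le_INR in Hk. pose proof (pos_INR k). unfold t.
    split; [apply Rdiv_le_0_compat; lra |].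
    apply (Rmult_le_reg_r (INR N)); [exact HN0 |]. field_simplify; lra. }
  assert (Hstep : forall k, t (S k) - t k = / INR N).
  { intros k. unfold t. rewrite S_INR. field. lra. }
  assert (Hshort : forall k p q, p <= q -> q - p <= b - a + (d - c) ->
            Rabs (p + t (S k) * (q - p) - (p + t k * (q - p))) < del).
  { intros k p q Hpq Hlen.
    replace (p + t (S k) * (q - p) - (p + t k * (q - p))) with ((q - p) / INR N)
      by (unfold Rdiv; rewrite <- (Hstep k); ring).
    rewrite Rabs_right by (apply Rle_ge, Rdiv_le_0_compat; lra).
    apply (Rmult_lt_reg_r (INR N)); [exact HN0 |]. field_simplify; nra. }
  assert (Hw : Rabs (w N - w O) <= INR N * 1).
  { apply Rabs_telescope_le. intros k Hk. left.
    assert (T1 := Ht k ltac:(lia)). assert (T2 := Ht (S k) Hk).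
    apply Hdel; try nra; apply Hshort; lra. }
  assert (Ht0 : t O = 0) by (unfold t; simpl; field; lra).
  assert (HtN : t N = 1) by (unfold t; field; lra).
  unfold w, H in Hw. rewrite Ht0, HtN, !Rmult_0_l, !Rplus_0_r, !Rmult_1_l, Rmult_1_r in Hw.
  replace (a + (x - a)) with x in Hw by ring. replace (c + (y - c)) with y in Hw by ring.
  rewrite !clamp_id in Hw by lra.
  pose proof (Rabs_triang_inv (h x y) (h a c)). lra.
Qed.

Lemma Rabs_le_sup_norm a b c d h : a <= b -> c <= d -> cont_on_rect a b c d h ->
  forall x y, a <= x <= b -> c <= y <= d -> Rabs (h x y) <= sup_norm a b c d h.
Proof.
  intros Hab Hcd Ch x y Hx Hy.
  destruct (bounded_on_rect a b c d h Hab Hcd Ch) as [M HM].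
  unfold sup_norm.
  set (S := fun z => exists x y, a <= x <= b /\ c <= y <= d /\ z = Rabs (h x y)).
  destruct (Lub_Rbar_correct S) as [Hub Hlub].
  assert (Hin := Hub (Rabs (h x y)) ltac:(exists x, y; auto)).
  assert (Hle : Rbar_le (Lub_Rbar S) M).
  { apply Hlub. intros z (x' & y' & Hx' & Hy' & ->). exact (HM x' y' Hx' Hy'). }
  destruct (Lub_Rbar S); simpl in *; tauto.
Qed.

Lemma continuous_slice H x y : continuity_2d_pt H x y -> continuous (H x) y.
Proof.
  intros HC. apply continuity_pt_filterlim, continuity_pt_locally. intros eps.
  destruct (HC eps) as [del Hdel]. exists del. intros v Hv.
  apply Hdel; [rewrite Rminus_diag, Rabs_R0; apply cond_pos | exact Hv].
Qed.

Lemma continuous_RInt_param c d H : c <= d ->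
  (forall x y, continuity_2d_pt H x y) -> forall x, continuous (fun x => RInt (H x) c d) x.
Proof.
  intros Hcd HC x. apply continuity_pt_filterlim, continuity_pt_locally. intros eps.
  assert (Hslice : forall z, ex_RInt (H z) c d).
  { intros z. apply (ex_RInt_continuous (V := R_CompleteNormedModule)).
    intros; apply continuous_slice, HC. }
  set (e := eps / (d - c + 1)).
  assert (He : 0 < e) by (apply Rdiv_lt_0_compat; [apply cond_pos | lra]).
  destruct (uniform_continuity_2d H (x - 1) (x + 1) c d (fun u v _ _ => HC u v)
              (mkposreal e He)) as [del Hdel].
  assert (Hpos : 0 < Rmin del 1) by (apply Rmin_pos; [apply cond_pos | lra]).
  exists (mkposreal _ Hpos). intros z Hz. change (Rabs (z - x) < Rmin del 1) in Hz.
  assert (Hz1 := Rlt_le_trans _ _ _ Hz (Rmin_l del 1)).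
  assert (Hz2 := Rlt_le_trans _ _ _ Hz (Rmin_r del 1)).
  assert (Hzx := proj1 (Rabs_lt_between' z x 1) Hz2).
  rewrite <- (RInt_minus (V := R_CompleteNormedModule)) by apply Hslice.
  eapply Rle_lt_trans.
  - apply (abs_RInt_le_const _ c d e Hcd).
    + apply (ex_RInt_minus (V := R_NormedModule)); apply Hslice.
    + intros v Hv. left. apply Hdel; try lra.
      rewrite Rminus_diag, Rabs_R0. apply cond_pos.
  - unfold e. apply Rlt_le_trans with ((d - c + 1) * (eps / (d - c + 1))).
    + apply Rmult_lt_compat_r; [exact He | lra].
    + right. field. lra.
Qed.

Lemma abs_RInt_le_scal f g a b k : a <= b -> ex_RInt f a b -> ex_RInt g a b ->
  (forall t, a <= t <= b -> Rabs (f t) <= k * g t) ->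
  Rabs (RInt f a b) <= k * RInt g a b.
Proof.
  intros Hab Ef Eg Hfg.
  eapply Rle_trans; [apply abs_RInt_le; assumption |].
  rewrite <- (RInt_scal (V := R_CompleteNormedModule)) by exact Eg.
  apply RInt_le; [exact Hab | | apply (ex_RInt_scal (V := R_NormedModule)), Eg |].
  - apply ex_RInt_norm, Ef.
  - intros t Ht. apply Hfg. lra.
Qed.

Lemma abs_iint_le_scal_continuous a b c d F G k : a <= b -> c <= d ->
  (forall x y, continuity_2d_pt F x y) -> (forall x y, continuity_2d_pt G x y) ->
  (forall x y, a <= x <= b -> c <= y <= d -> Rabs (F x y) <= k * G x y) ->
  Rabs (iint a b c d F) <= k * iint a b c d G.
Proof.
  intros Hab Hcd CF CG HFG.
  assert (Hex : forall H, (forall x y, continuity_2d_pt H x y) ->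
            (forall x, ex_RInt (H x) c d) /\ ex_RInt (fun x => RInt (H x) c d) a b).
  { intros H CH. split.
    - intros x. apply (ex_RInt_continuous (V := R_CompleteNormedModule)).
      intros; apply continuous_slice, CH.
    - apply (ex_RInt_continuous (V := R_CompleteNormedModule)).
      intros; apply continuous_RInt_param; assumption. }
  destruct (Hex F CF) as [EF EF']. destruct (Hex G CG) as [EG EG'].
  apply abs_RInt_le_scal; [assumption .. |].
  intros x Hx. apply abs_RInt_le_scal; [assumption | apply EF | apply EG |].
  intros y Hy. apply HFG; assumption.
Qed.

Lemma iint_ext_rect a b c d F G : a <= b -> c <= d ->
  (forall x y, a <= x <= b -> c <= y <= d -> F x y = G x y) ->
  iint a b c d F = iint a b c d G.
Proof.
  intros Hab Hcd HFG. unfold iint.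
  apply RInt_ext. rewrite Rmin_left, Rmax_right by exact Hab. intros x Hx.
  apply RInt_ext. rewrite Rmin_left, Rmax_right by exact Hcd. intros y Hy.
  apply HFG; lra.
Qed.

Lemma abs_iint_le_scal a b c d F G k : a <= b -> c <= d ->
  (forall x y, continuity_2d_pt (fun u v => F (clamp a b u) (clamp c d v)) x y) ->
  (forall x y, continuity_2d_pt (fun u v => G (clamp a b u) (clamp c d v)) x y) ->
  (forall x y, a <= x <= b -> c <= y <= d -> Rabs (F x y) <= k * G x y) ->
  Rabs (iint a b c d F) <= k * iint a b c d G.
Proof.
  intros Hab Hcd CF CG HFG.
  assert (Hclamp : forall H, iint a b c d H
                           = iint a b c d (fun u v => H (clamp a b u) (clamp c d v))).
  { intros H. apply iint_ext_rect; try assumption.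
    intros x y Hx Hy. rewrite !clamp_id by assumption. reflexivity. }
  rewrite (Hclamp F), (Hclamp G).
  apply abs_iint_le_scal_continuous; try assumption.
  intros x y Hx Hy. apply HFG; apply clamp_in; assumption.
Qed.

Lemma Rabs_mul_sub_half_le u v p q A B : Rabs (u - p) <= A -> Rabs (v - q) <= B ->
  Rabs (u * v - / 2 * (p * v + q * u)) <= / 2 * (A * Rabs v + B * Rabs u).
Proof.
  intros Hu Hv.
  replace (u * v - / 2 * (p * v + q * u)) with (/ 2 * ((u - p) * v + (v - q) * u)) by field.
  rewrite Rabs_mult, (Rabs_right (/ 2)) by lra.
  apply Rmult_le_compat_l; [lra |].
  eapply Rle_trans; [apply Rabs_triang | rewrite !Rabs_mult].
  apply Rplus_le_compat; apply Rmult_le_compat_r; try apply Rabs_pos; assumption.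
Qed.

Theorem corollary2p1 (a b c d : R) (f g f1 f2 f12 g1 g2 g12 : R -> R -> R) :
  a < b -> c < d ->
  cont_on_rect a b c d f -> cont_on_rect a b c d g ->
  is_D1 a b c d f f1 -> is_D2 a b c d f f2 ->
  is_D1 a b c d g g1 -> is_D2 a b c d g g2 ->
  is_D2 a b c d f1 f12 -> is_D2 a b c d g1 g12 ->
  cont_on_rect a b c d f1 -> cont_on_rect a b c d f2 ->
  cont_on_rect a b c d g1 -> cont_on_rect a b c d g2 ->
  cont_on_rect a b c d f12 -> cont_on_rect a b c d g12 ->
  Rabs (iint a b c d (fun x y =>
          f x y * g x y
          - / 2 * (Pop a b c d f x y * g x y + Pop a b c d g x y * f x y)))
  <= / 8 * (b - a) * (d - c) *
     iint a b c d (fun x y =>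
          Rabs (g x y) * sup_norm a b c d f12
          + Rabs (f x y) * sup_norm a b c d g12).
Proof.
  intros Hab Hcd Cf Cg Df1 _ Dg1 _ Df12 Dg12 _ _ _ _ Cf12 Cg12.
  apply Rlt_le in Hab, Hcd.
  assert (Devf := Rabs_sub_Pop_le a b c d f f1 f12 _ Hab Hcd Df1 Df12
                    (Rabs_le_sup_norm a b c d f12 Hab Hcd Cf12)).
  assert (Devg := Rabs_sub_Pop_le a b c d g g1 g12 _ Hab Hcd Dg1 Dg12
                    (Rabs_le_sup_norm a b c d g12 Hab Hcd Cg12)).
  apply abs_iint_le_scal; [assumption | assumption | | |].
  1, 2: intros x y; cbv beta;
    repeat first [ apply continuity_2d_pt_clamp; assumption
                 | apply continuity_2d_pt_Pop_clamp; assumption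
                 | apply continuity_2d_pt_minus | apply continuity_2d_pt_plus
                 | apply continuity_2d_pt_mult | apply continuity_2d_pt_const
                 | apply continuity_1d_2d_pt_comp; [apply Rcontinuity_abs |] ].
  intros x y Hx Hy.
  eapply Rle_trans; [apply Rabs_mul_sub_half_le; [apply Devf | apply Devg]; assumption |].
  right. field.
Qed.
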